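(* Let $X$ be a first-countable $T_0$ space such that for every $K\in\mathsf{K}(X)$ the set $\min(K)$ of minimal elements of $K$ is countable. Then the Smyth power space $P_S(X)$ is first-countable.
   Context: The specialization order of $X$ is $x\le y$ iff $x\in\overline{\{y\}}$; saturated sets are upper sets in this order. $\mathsf{K}(X)$ is the set of nonempty compact saturated subsets of $X$; $\min(K)$ is the set of minimal elements of $K$ with respect to the specialization order. For open $U\subseteq X$, $\Box U=\{K\in\mathsf{K}(X):K\subseteq U\}$; the Smyth power space $P_S(X)$ is $\mathsf{K}(X)$ with the topology having base $\{\Box U: U\text{ open}\}$ (upper Vietoris topology). *)

From Stdlib Require Import List.

Definition is_topology {X : Type} (opn : (X -> Prop) -> Prop) : Prop :=
  opn (fun _ => True) /\
  (forall U V, opn U -> opn V -> opn (fun x => U x /\ V x)) /\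
  (forall F : (X -> Prop) -> Prop, (forall U, F U -> opn U) ->
     opn (fun x => exists U, F U /\ U x)).

Definition T0 {X : Type} (opn : (X -> Prop) -> Prop) : Prop :=
  forall x y : X, (forall U, opn U -> (U x <-> U y)) -> x = y.

Definition first_countable {X : Type} (opn : (X -> Prop) -> Prop) : Prop :=
  forall x : X, exists B : nat -> (X -> Prop),
    (forall n, opn (B n) /\ B n x) /\
    (forall U, opn U -> U x -> exists n, forall z, B n z -> U z).

Definition countable_set {X : Type} (S : X -> Prop) : Prop :=
  exists g : X -> nat, forall x y, S x -> S y -> g x = g y -> x = y.

Definition spec_le {X : Type} (opn : (X -> Prop) -> Prop) (x y : X) : Prop :=
  forall U, opn U -> U x -> U y.

Definition saturated {X : Type} (opn : (X -> Prop) -> Prop) (K : X -> Prop) : Prop :=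
  forall x y, K x -> spec_le opn x y -> K y.

Definition compact {X : Type} (opn : (X -> Prop) -> Prop) (K : X -> Prop) : Prop :=
  forall F : (X -> Prop) -> Prop,
    (forall U, F U -> opn U) ->
    (forall x, K x -> exists U, F U /\ U x) ->
    exists l : list (X -> Prop),
      (forall U, In U l -> F U) /\
      (forall x, K x -> exists U, In U l /\ U x).

Definition inK {X : Type} (opn : (X -> Prop) -> Prop) (K : X -> Prop) : Prop :=
  (exists x, K x) /\ compact opn K /\ saturated opn K.

Definition minset {X : Type} (opn : (X -> Prop) -> Prop) (K : X -> Prop) : X -> Prop :=
  fun x => K x /\ (forall y, K y -> spec_le opn y x -> y = x).

Definition KX {X : Type} (opn : (X -> Prop) -> Prop) : Type :=
  { K : X -> Prop | inK opn K }.

Definition box {X : Type} (opn : (X -> Prop) -> Prop) (U : X -> Prop) : KX opn -> Prop :=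
  fun K => forall x, proj1_sig K x -> U x.

(* Upper Vietoris topology: generated by the base { Box U | U open },
   i.e. W is open iff it is a union of basic sets Box U. *)
Definition smyth_open {X : Type} (opn : (X -> Prop) -> Prop) (W : KX opn -> Prop) : Prop :=
  forall K, W K -> exists U, opn U /\ box opn U K /\ (forall L, box opn U L -> W L).

(* Every point of a compact saturated set K lies above a minimal point of K:
   a chain in K has a lower bound in K by compactness, and Zorn's lemma applies.
   Hence any open U containing K is already covered by finitely many basic
   neighbourhoods of minimal points of K that lie inside U. With countably
   many minimal points, each with a countable base, such finite covers are
   coded by finite lists of pairs of naturals; their unions form a countable
   neighbourhood base of K, and the boxes of these unions a countable
   neighbourhood base of K in the Smyth power space. *)
From Stdlib Require Import List.
From mathcomp Require Import ssreflect ssrfun ssrbool choice.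
From mathcomp Require Import boolp classical_sets.

Lemma list_witnesses {A B : Type} (R : A -> B -> Prop) (l : list A) :
  (forall a, In a l -> exists b, R a b) ->
  exists s : list B, (forall b, In b s -> exists a, R a b) /\
                     (forall a, In a l -> exists b, In b s /\ R a b).
Proof.
elim: l => [|a l IH] Hl; first by exists nil; split=> [b|a] [].
have [b Rab] := Hl a (or_introl erefl).
have [s [sR ls]] := IH (fun a' la' => Hl a' (or_intror la')).
exists (b :: s); split.
- by move=> b' [<-|sb']; [exists a | exact: sR].
- move=> a' [<-|la']; first by exists b; split=> //; left.
  by have [b' [sb' Rb']] := ls a' la'; exists b'; split=> //; right.
Qed.

Lemma finite_chain_lower_bound {T : Type} (R : T -> T -> Prop) (C : T -> Prop) (a0 : T) :
  (forall t, R t t) -> (forall r s t, R r s -> R s t -> R r t) ->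
  (forall s t, C s -> C t -> R s t \/ R t s) -> C a0 ->
  forall l : list T, (forall c, In c l -> C c) ->
  exists c0, C c0 /\ forall c, In c l -> R c0 c.
Proof.
move=> Rrefl Rtrans Ctot Ca0; elim=> [|c l IH] lC; first by exists a0.
have [c0 [Cc0 c0_lb]] := IH (fun d ld => lC d (or_intror ld)).
have Cc := lC c (or_introl erefl).
case: (Ctot c0 c Cc0 Cc) => [c0c|cc0].
- by exists c0; split=> // d [<-|ld]; [exact: c0c | exact: c0_lb].
- by exists c; split=> // d [<-|ld]; [exact: Rrefl | exact: Rtrans cc0 (c0_lb d ld)].
Qed.

Section SpecializationOrder.

Variables (X : Type) (opn : (X -> Prop) -> Prop).
Hypothesis Htop : is_topology opn.

Lemma spec_le_refl (x : X) : spec_le opn x x.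
Proof. by move=> U _. Qed.

Lemma spec_le_trans (x y z : X) :
  spec_le opn x y -> spec_le opn y z -> spec_le opn x z.
Proof. by move=> xy yz U HU Ux; apply: yz (xy U HU Ux). Qed.

Lemma open_indexed_union {I : Type} (P : I -> Prop) (A : I -> X -> Prop) :
  (forall i, P i -> opn (A i)) -> opn (fun z => exists i, P i /\ A i z).
Proof.
move=> HA.
have -> : (fun z => exists i, P i /\ A i z) =
          (fun z => exists V, (exists i, P i /\ V = A i) /\ V z).
  apply: funext => z; apply: propext; split.
  - by move=> [i [Pi Aiz]]; exists (A i); split=> //; exists i.
  - by move=> [V [[i [Pi ->]] Vz]]; exists i.
by apply: (proj2 (proj2 Htop)) => V [i [Pi ->]]; exact: HA.
Qed.

Definition co_closure (c : X) : X -> Prop :=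
  fun z => exists U, (opn U /\ ~ U c) /\ U z.

Lemma co_closure_open (c : X) : opn (co_closure c).
Proof. by apply: (open_indexed_union (fun U => opn U /\ ~ U c) (fun U => U)) => U []. Qed.

Lemma co_closureP (c z : X) : co_closure c z <-> ~ spec_le opn z c.
Proof.
split; first by move=> [U [[HU nUc] Uz]] zc; exact: nUc (zc U HU Uz).
by move=> /existsNP [U] /not_implyP [HU] /not_implyP [Uz nUc]; exists U.
Qed.

Lemma compact_indexed_subcover {I : Type} (A : I -> X -> Prop) (P : I -> Prop)
    (K : X -> Prop) :
  compact opn K -> (forall i, P i -> opn (A i)) ->
  (forall x, K x -> exists i, P i /\ A i x) ->
  exists s : list I, (forall i, In i s -> P i) /\
                     (forall x, K x -> exists i, In i s /\ A i x).
Proof.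
move=> HK HA cover.
case: (HK (fun V => exists i, P i /\ V = A i)).
- by move=> V [i [Pi ->]]; exact: HA.
- move=> x Kx; have [i [Pi Aix]] := cover x Kx.
  by exists (A i); split=> //; exists i.
move=> l [lF l_cover].
have [s [sl ls]] := list_witnesses (fun V i => P i /\ V = A i) l lF.
exists s; split; first by move=> i /sl [V []].
move=> x /l_cover [V [lV Vx]]; have [i [si [_ E]]] := ls V lV.
by exists i; split=> //; rewrite -E.
Qed.

Lemma compact_chain_lower_bound (K C : X -> Prop) (a0 : X) :
  compact opn K -> C a0 -> (forall c, C c -> K c) ->
  (forall s t, C s -> C t -> spec_le opn s t \/ spec_le opn t s) ->
  exists z, K z /\ forall c, C c -> spec_le opn z c.
Proof.
move=> HK Ca0 CK Ctot; apply: contrapT => no_lb.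
have cover z : K z -> exists c, C c /\ co_closure c z.
  move=> Kz; apply: contrapT => nz; apply: no_lb; exists z; split=> // c Cc.
  by apply: contrapT => nzc; apply: nz; exists c; split=> //; apply/co_closureP.
have [l [lC l_cover]] :=
  compact_indexed_subcover co_closure C K HK (fun c _ => co_closure_open c) cover.
have [c0 [Cc0 c0_lb]] :=
  finite_chain_lower_bound _ C a0 spec_le_refl spec_le_trans Ctot Ca0 l lC.
have [c [lc /co_closureP c0c]] := l_cover c0 (CK c0 Cc0).
exact: c0c (c0_lb c lc).
Qed.

Lemma exists_minset_below (K : X -> Prop) (x : X) :
  T0 opn -> compact opn K -> K x -> exists m, minset opn K m /\ spec_le opn m x.
Proof.
move=> HT0 HK Kx.
pose T := {y : X | K y /\ spec_le opn y x}.
pose R (a b : T) := `[< spec_le opn (sval b) (sval a) >].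
have [|||t t_max] := @ZL_preorder T (exist _ x (conj Kx (spec_le_refl x))) R.
- by move=> a; apply/asboolP; exact: spec_le_refl.
- by move=> a b c /asboolP ab /asboolP bc; apply/asboolP; exact: spec_le_trans bc ab.
- move=> A Atot.
  pose C y := y = x \/ exists a, A a /\ sval a = y.
  have below_x y : C y -> K y /\ spec_le opn y x.
    by move=> [->|[a [_ <-]]]; [split; [|exact: spec_le_refl] | exact: (svalP a)].
  have Ctot s u : C s -> C u -> spec_le opn s u \/ spec_le opn u s.
    move=> Cs Cu; case: Cs => [->|[a [Aa <-]]]; first by right; case: (below_x u Cu).
    case: Cu => [->|[b [Ab <-]]]; first by left; case: (svalP a).
    by case: (Atot a b Aa Ab) => /asboolP; [right | left].
  have [z [Kz z_lb]] := compact_chain_lower_bound K C x HK (or_introl erefl)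
    (fun y Cy => proj1 (below_x y Cy)) Ctot.
  exists (exist _ z (conj Kz (z_lb x (or_introl erefl)))) => a Aa.
  by apply/asboolP; apply: z_lb; right; exists a.
exists (sval t); split; last exact: (proj2 (svalP t)).
split=> [|y Ky yt]; first exact: (proj1 (svalP t)).
have yx := spec_le_trans _ _ _ yt (proj2 (svalP t)).
have /asboolP ty : R (exist _ y (conj Ky yx)) t by apply: t_max; apply/asboolP.
by apply: HT0 => U HU; split; [exact: yt | exact: ty].
Qed.

Lemma compact_countable_nbhd_base (K M : X -> Prop) :
  first_countable opn -> compact opn K -> countable_set M ->
  (forall m, M m -> K m) -> (forall x, K x -> exists m, M m /\ spec_le opn m x) ->
  exists O : nat -> X -> Prop, (forall k, opn (O k)) /\
    forall U, opn U -> (forall x, K x -> U x) ->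
      exists k, (forall x, K x -> O k x) /\ (forall z, O k z -> U z).
Proof.
move=> Hfc HK [g g_inj] MK K_above_M.
have [B HB] := choice Hfc.
pose Bp (p : nat * nat) z := exists m, (M m /\ g m = p.1) /\ B m p.2 z.
have Bp_open p : opn (Bp p).
  by apply: open_indexed_union => m _; exact: (proj1 (HB m) p.2).1.
pose codes k := odflt nil (@unpickle (list (nat * nat)) k).
exists (fun k z => exists p, In p (codes k) /\ Bp p z); split.
  by move=> k; apply: open_indexed_union => p _; exact: Bp_open.
move=> U HU KU.
have cover x : K x -> exists p, (forall z, Bp p z -> U z) /\ Bp p x.
  move=> Kx; have [m [Mm mx]] := K_above_M x Kx.
  have [n BU] := (HB m).2 U HU (KU m (MK m Mm)).
  exists (g m, n); split.
  - by move=> z [m' [[Mm' /g_inj ->] //]]; exact: BU.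
  - have [Bopen Bm] := (HB m).1 n.
    by exists m; split=> //; exact: mx _ Bopen Bm.
have [s [sU s_cover]] := compact_indexed_subcover Bp _ K HK (fun p _ => Bp_open p) cover.
exists (pickle s); rewrite /codes pickleK /=; split; first exact: s_cover.
by move=> z [p [sp Bpz]]; exact: sU p sp z Bpz.
Qed.

Lemma smyth_open_guarded_box (P : Prop) (U : X -> Prop) :
  opn U -> smyth_open opn (fun L => P -> box opn U L).
Proof.
move=> HU L PL; case: (EM P) => [HP|nP].
- by exists U; split=> //; split; [exact: PL | move=> L' UL' _].
- by exists (fun _ => True); split; [exact: Htop.1 | split=> // L' _ /nP].
Qed.

End SpecializationOrder.

Theorem mainTheorem3 (X : Type) (opn : (X -> Prop) -> Prop)
  (Htop : is_topology opn) (HT0 : T0 opn) (Hfc : first_countable opn)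
  (Hmin : forall K : X -> Prop, inK opn K -> countable_set (minset opn K)) :
  first_countable (smyth_open opn).
Proof.
move=> [K HK]; have [_ [K_compact _]] := HK.
have [O [O_open O_base]] :=
  compact_countable_nbhd_base X opn Htop K (minset opn K) Hfc K_compact (Hmin K HK)
    (fun m Mm => Mm.1) (fun x Kx => exists_minset_below X opn Htop K x HT0 K_compact Kx).
(* When O k does not contain K the guarded box is the whole space, so every
   member of the family is an open neighbourhood of K. *)
exists (fun k L => (forall x, K x -> O k x) -> box opn (O k) L); split.
  by move=> k; split; [exact: smyth_open_guarded_box | move=> KO].
move=> W HW WK; have [U [HU [KU UW]]] := HW _ WK.
have [k [KO OU]] := O_base U HU KU.
by exists k => L OL; apply: UW => z Lz; exact: OU z (OL KO z Lz).
Qed.
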